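(* Let $q\ge 7$ and $s\in[1,7]$ be integers, $C$ a finite set with $|C|=2q+s$, and $M\in\mathcal M(6,q,C)$. Suppose the maximum degree of the graph $G$ associated with $M$ equals $3$, $\{i,j,k,l,m,n\}=\{1,\dots,6\}$, and $r(i,l)\ge1$, $r(j,l)\ge1$, $r(k,l)\ge1$. Then $r(l,m,n)\ge q+3s-24$.
   Context: $\mathcal M(6,q,C)$ is the set of $6\times q$ matrices $M$ with entries from $C$ such that each row has $q$ pairwise distinct entries, each column has $6$ pairwise distinct entries, and every pair of distinct colours of $C$ appears together in some row or some column of $M$. The frequency of a colour is the number of entries of $M$ equal to it. For rows $a\ne b$, $r(a,b)$ is the number of colours of frequency exactly $2$ appearing in both row $a$ and row $b$; for distinct rows $a,b,c$, $r(a,b,c)$ is the number of colours of frequency exactly $3$ appearing in each of rows $a,b,c$. The graph $G$ associated with $M$ has vertex set $\{1,\dots,6\}$, with $\{a,b\}$ an edge iff $r(a,b)\ge 1$. *)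

From mathcomp Require Import all_boot all_order all_algebra.
Set Implicit Arguments. Unset Strict Implicit. Unset Printing Implicit Defensive.

(* Rows are indexed by 'I_6 (row a+1 of the paper is index a), columns by 'I_q. *)

Section Defs.
Variables (C : finType) (q : nat).
Implicit Types (M : 'M[C]_(6, q)).

Definition in_row M (a : 'I_6) (c : C) : bool := [exists j, M a j == c].
Definition in_col M (j : 'I_q) (c : C) : bool := [exists a, M a j == c].

Definition inM M : Prop :=
  [/\ (forall a : 'I_6, injective (fun j : 'I_q => M a j)),
      (forall j : 'I_q, injective (fun a : 'I_6 => M a j)) &
      (forall c d : C, c != d ->
         (exists a, in_row M a c && in_row M a d) \/
         (exists j, in_col M j c && in_col M j d))].

Definition freq M (c : C) : nat := #|[set p : 'I_6 * 'I_q | M p.1 p.2 == c]|.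

Definition r2 M (a b : 'I_6) : nat :=
  #|[set c : C | [&& freq M c == 2, in_row M a c & in_row M b c]]|.

Definition r3 M (a b d : 'I_6) : nat :=
  #|[set c : C | [&& freq M c == 3, in_row M a c, in_row M b c & in_row M d c]]|.

Definition Gadj M (a b : 'I_6) : bool := (a != b) && (1 <= r2 M a b).
Definition Gdeg M (a : 'I_6) : nat := #|[set b | Gadj M a b]|.
Definition maxdeg M : nat := \max_(a : 'I_6) Gdeg M a.

End Defs.

From mathcomp Require Import all_boot all_order all_algebra zify.
Import GRing.Theory Num.Theory.
Set Implicit Arguments. Unset Strict Implicit. Unset Printing Implicit Defensive.

(* A colour c of frequency f shares a row or a column with every other colour, so
   |C| is at most the number of colours in the rows of c plus the (6 - f) f cells
   lying in a column of c but a row avoiding c. With |C| = 2q + s this excludes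
   frequency 1, and two rows sharing a colour of frequency 2 share at most 8 - s
   colours. As row l has degree 3 with neighbours i, j, k, it shares no colour of
   frequency 2 with rows m, n; so at least q - 3 (8 - s) colours of row l avoid
   rows i, j, k. Each of them lies only in rows among l, m, n and has frequency at
   least 2; frequency 2 would create an edge from l to m or n, so it has
   frequency exactly 3, in rows l, m, n. *)

Lemma leq_card_setD3 (T : finType) (A B1 B2 B3 : {set T}) :
  #|A| <= #|A :\: (B1 :|: B2 :|: B3)| + #|A :&: B1| + #|A :&: B2| + #|A :&: B3|.
Proof.
rewrite -(cardsID (B1 :|: B2 :|: B3) A) !setIUr addnC -!addnA leq_add2l.
apply: (leq_trans (leq_card_setU _ _)); rewrite addnA leq_add2r.
exact: leq_card_setU.
Qed.

Section Colouring.
Variables (C : finType) (q : nat) (M : 'M[C]_(6, q)).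
Hypothesis HM : inM M.

Definition rows_of (c : C) : {set 'I_6} := [set a | in_row M a c].
Definition row_colours (a : 'I_6) : {set C} := [set d | in_row M a d].

Lemma freq_rows c : freq M c = #|rows_of c|.
Proof.
have [row_inj _ _] := HM.
have -> : rows_of c = [set p.1 | p in [set p : 'I_6 * 'I_q | M p.1 p.2 == c]].
  apply/setP => a; rewrite !inE; apply/existsP/imsetP => [[j Hj]|[[a' j]]].
    by exists (a, j); rewrite ?inE.
  by rewrite inE /= => Hj ->; exists j.
rewrite card_in_imset // => -[a1 j1] [a2 j2]; rewrite !inE /= => /eqP E1 /eqP E2 Ea.
by subst a2; congr pair; apply: (row_inj a1); rewrite /= E1 E2.
Qed.

Lemma card_cols_le_freq c : #|[set j | in_col M j c]| <= freq M c.
Proof.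
have -> : [set j | in_col M j c] = [set p.2 | p in [set p : 'I_6 * 'I_q | M p.1 p.2 == c]].
  apply/setP => j; rewrite !inE; apply/existsP/imsetP => [[a Hj]|[[a j']]].
    by exists (a, j); rewrite ?inE.
  by rewrite inE /= => Hj ->; exists a.
exact: leq_imset_card.
Qed.

Lemma card_row_colours a : #|row_colours a| = q.
Proof.
have [row_inj _ _] := HM.
have -> : row_colours a = [set M a j | j in [set: 'I_q]].
  apply/setP => d; rewrite !inE; apply/existsP/imsetP => [[j /eqP <-]|[j _ ->]];
  by exists j.
by rewrite card_in_imset ?cardsT ?card_ord // => x y _ _; apply: row_inj.
Qed.

Lemma card_le_cover a0 c : in_row M a0 c ->
  #|C| <= #|\bigcup_(a in rows_of c) row_colours a| + (6 - freq M c) * freq M c.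
Proof.
move=> Ha0c; have [_ _ pairs_met] := HM.
set U := \bigcup_(a in rows_of c) row_colours a.
set X := setX (~: rows_of c) [set j | in_col M j c].
have U_row a d : in_row M a c -> in_row M a d -> d \in U.
  by move=> Hc Hd; apply/bigcupP; exists a; rewrite inE.
have cover : [set: C] \subset U :|: [set M p.1 p.2 | p in X].
  apply/subsetP => d _; rewrite inE.
  have [->|ndc] := eqVneq d c; first by rewrite (U_row a0).
  have [[a /andP[Hc Hd]]|[j /andP[Hc /existsP[a /eqP Ed]]]] := pairs_met c d
    ltac:(by rewrite eq_sym).
    by rewrite (U_row a).
  have [Hac|Hac] := boolP (in_row M a c).
    by rewrite (U_row a) //; apply/existsP; exists j; rewrite Ed.
  by apply/orP; right; apply/imsetP; exists (a, j); rewrite ?inE ?Hac.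
have card_X : #|X| <= (6 - freq M c) * freq M c.
  rewrite cardsX leq_mul ?card_cols_le_freq // freq_rows.
  by have := cardsC (rows_of c); rewrite card_ord; lia.
rewrite -cardsT; apply: (leq_trans (subset_leq_card cover)).
apply: (leq_trans (leq_card_setU _ _)); rewrite leq_add2l.
exact: leq_trans (leq_imset_card _ _) card_X.
Qed.

Lemma freq_gt1 a c : q + 5 < #|C| -> in_row M a c -> 1 < freq M c.
Proof.
move=> big_C Hac; rewrite ltnNge; apply/negP => freq_le1.
have rows_c : rows_of c = [set a].
  apply/eqP; rewrite eq_sym eqEcard sub1set inE Hac cards1 -freq_rows /=.
  exact: freq_le1.
have := card_le_cover Hac; rewrite rows_c big_set1 card_row_colours freq_rows rows_c cards1.
by rewrite leqNgt big_C.
Qed.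

Lemma rows_of_freq2 a b c : a != b -> in_row M a c -> in_row M b c ->
  freq M c = 2 -> rows_of c = [set a; b].
Proof.
move=> nab Hac Hbc freq2; apply/esym/eqP.
rewrite eqEcard cards2 nab -freq_rows freq2 andbT.
by apply/subsetP => x; rewrite !inE => /orP[] /eqP->.
Qed.

Lemma card_row_coloursI a b : a != b -> 0 < r2 M a b ->
  #|row_colours a :&: row_colours b| + #|C| <= 2 * q + 8.
Proof.
move=> nab /card_gt0P[c]; rewrite inE => /and3P[/eqP freq2 Hac Hbc].
have := card_le_cover Hac; rewrite (rows_of_freq2 nab Hac Hbc freq2) freq2.
rewrite bigcup_setU !big_set1 => cover.
have := cardsUI (row_colours a) (row_colours b); rewrite !card_row_colours.
lia.
Qed.

Lemma card_row_colours_avoid3 a b1 b2 b3 : a \notin [:: b1; b2; b3] ->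
  0 < r2 M a b1 -> 0 < r2 M a b2 -> 0 < r2 M a b3 ->
  q + 3 * #|C| <=
    #|row_colours a :\: (row_colours b1 :|: row_colours b2 :|: row_colours b3)| + 6 * q + 24.
Proof.
rewrite !inE !negb_or => /and3P[ab1 ab2 ab3] r2ab1 r2ab2 r2ab3.
have := leq_card_setD3 (row_colours a) (row_colours b1) (row_colours b2) (row_colours b3).
have := card_row_coloursI ab1 r2ab1; have := card_row_coloursI ab2 r2ab2.
have := card_row_coloursI ab3 r2ab3; rewrite card_row_colours.
lia.
Qed.

Lemma r2_gt0_of_rows_sub a b c : q + 5 < #|C| -> in_row M a c ->
  rows_of c \subset [set a; b] -> 0 < r2 M a b.
Proof.
move=> big_C Hac sub_ab; apply/card_gt0P; exists c.
have freq_ge2 := freq_gt1 big_C Hac.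
have card_ab : #|[set a; b]| <= 2 by rewrite cards2; case: (a != b).
have rows_c : rows_of c = [set a; b].
  apply/eqP; rewrite eqEcard sub_ab -freq_rows.
  exact: leq_trans card_ab freq_ge2.
have : b \in rows_of c by rewrite rows_c !inE eqxx orbT.
rewrite !inE Hac => ->.
by rewrite eqn_leq freq_ge2 freq_rows rows_c card_ab.
Qed.

Lemma freq3_of_rows_sub a b d c : q + 5 < #|C| -> uniq [:: a; b; d] ->
  r2 M a b = 0 -> r2 M a d = 0 -> in_row M a c ->
  rows_of c \subset [set a; b; d] ->
  [&& freq M c == 3, in_row M a c, in_row M b c & in_row M d c].
Proof.
move=> big_C abd_uniq r2ab r2ad Hac sub_abd.
have drop_row x y : ~~ in_row M x c -> rows_of c \subset [set a; x; y] ->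
    rows_of c \subset [set a; y].
  move=> Hxc /subsetP sub; apply/subsetP => z Hz; have := sub z Hz; rewrite !inE -orbA.
  by case/or3P => [->|/eqP Ezx|->]; rewrite ?orbT //; move: Hz; rewrite Ezx inE (negbTE Hxc).
(* missing row [b] would make [c] a frequency-2 colour of rows [a] and [d] *)
have Hbc : in_row M b c.
  apply: contraT => Hbc.
  by have := r2_gt0_of_rows_sub big_C Hac (drop_row _ _ Hbc sub_abd); rewrite r2ad.
have Hdc : in_row M d c.
  have sub_adb : rows_of c \subset [set a; d; b] by rewrite setUAC.
  apply: contraT => Hdc.
  by have := r2_gt0_of_rows_sub big_C Hac (drop_row _ _ Hdc sub_adb); rewrite r2ab.
have card_abd : #|[set a; b; d]| = 3.
  rewrite -[RHS]/(size [:: a; b; d]) -(card_uniqP abd_uniq).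
  by apply: eq_card => x; rewrite !inE orbA.
have rows_c : rows_of c = [set a; b; d].
  apply/eqP; rewrite eqEsubset sub_abd; apply/subsetP => x.
  by rewrite !inE -orbA => /or3P[] /eqP->.
by rewrite Hac Hbc Hdc freq_rows rows_c card_abd.
Qed.

End Colouring.

Lemma r2C (C : finType) q (M : 'M[C]_(6, q)) a b : r2 M a b = r2 M b a.
Proof. by apply: eq_card => x; rewrite !inE [in_row M a x && _]andbC. Qed.

Lemma size_neighbours_le_maxdeg (C : finType) q (M : 'M[C]_(6, q)) a s :
  uniq (a :: s) -> all (fun b => 0 < r2 M a b) s -> size s <= maxdeg M.
Proof.
rewrite cons_uniq => /andP[a_notin_s s_uniq] /allP s_adj.
rewrite -(card_uniqP s_uniq) /maxdeg; apply: (leq_trans _ (leq_bigmax a)).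
apply/subset_leq_card/subsetP => b b_in_s; rewrite inE /Gadj s_adj // andbT.
by apply: contraNneq a_notin_s => ->.
Qed.

Lemma mem_uniq_full (T : finType) (s : seq T) x : uniq s -> #|T| <= size s -> x \in s.
Proof.
move=> s_uniq; rewrite cardT => size_s.
have [_ s_eq] := uniq_min_size s_uniq (fun y _ => mem_enum _ y) size_s.
by rewrite s_eq mem_enum.
Qed.

Lemma rows_of_sub_compl3 (C : finType) q (M : 'M[C]_(6, q)) (x y z a b d : 'I_6) c :
  uniq [:: x; y; z; a; b; d] ->
  ~~ in_row M x c -> ~~ in_row M y c -> ~~ in_row M z c ->
  rows_of M c \subset [set a; b; d].
Proof.
move=> xs_uniq /negbTE Hxc /negbTE Hyc /negbTE Hzc; apply/subsetP => e; rewrite inE.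
move: (mem_uniq_full e xs_uniq (eq_leq (card_ord 6))); rewrite !inE.
by case/or4P=> [| | |/or3P[]] /eqP-> Hec; rewrite ?eqxx ?orbT //; congruence.
Qed.

Theorem claim6 (q s : nat) (C : finType) (M : 'M[C]_(6, q))
  (i j k l m n : 'I_6) :
  7 <= q -> 1 <= s <= 7 -> #|C| = 2 * q + s ->
  inM M -> maxdeg M = 3 ->
  uniq [:: i; j; k; l; m; n] ->
  1 <= r2 M i l -> 1 <= r2 M j l -> 1 <= r2 M k l ->
  ((q%:Z + 3 * s%:Z - 24)%R <= (r3 M l m n)%:Z)%R.
Proof.
move=> q_ge7 /andP[s_ge1 s_le7] card_C HM maxdeg3 rows_uniq r2il r2jl r2kl.
have big_C : q + 5 < #|C| by rewrite card_C; lia.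
move: r2il r2jl r2kl; rewrite -!(r2C M l) => r2il r2jl r2kl.
have lmnijk_uniq : uniq [:: l; m; n; i; j; k] by rewrite -(rot_uniq 3).
have not_adj y : uniq [:: l; y; i; j; k] -> r2 M l y = 0.
  move=> ly_uniq; apply/eqP; rewrite -leqn0 leqNgt; apply/negP => r2ly.
  suff : size [:: y; i; j; k] <= maxdeg M by rewrite maxdeg3.
  by apply: size_neighbours_le_maxdeg ly_uniq _; rewrite /= r2ly r2il r2jl r2kl.
have r2lm := not_adj m (mask_uniq lmnijk_uniq [:: true; true; false; true; true; true]).
have r2ln := not_adj n (mask_uniq lmnijk_uniq [:: true; false; true; true; true; true]).
have lmn_uniq : uniq [:: l; m; n] :=
  mask_uniq lmnijk_uniq [:: true; true; true; false; false; false].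
have /andP[l_notin_ijk _] := mask_uniq lmnijk_uniq [:: true; false; false; true; true; true].
have card_A := card_row_colours_avoid3 HM l_notin_ijk r2il r2jl r2kl.
set A := row_colours M l :\: _ in card_A.
have A_sub : A \subset
    [set c | [&& freq M c == 3, in_row M l c, in_row M m c & in_row M n c]].
  apply/subsetP => c /setDP[]; rewrite !inE !negb_or => Hlc /andP[/andP[Hic Hjc] Hkc].
  apply: (freq3_of_rows_sub HM big_C lmn_uniq r2lm r2ln Hlc).
  exact: rows_of_sub_compl3 rows_uniq Hic Hjc Hkc.
have := subset_leq_card A_sub; rewrite -/(r3 M l m n).
lia.
Qed.
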